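(* Let $\mathfrak n$ be a finite-dimensional real two-step nilpotent Lie algebra with center $\mathfrak z$, and let $n=\dim\mathfrak n-\dim\mathfrak z$. If $n\ge3$ and $2\dim[\mathfrak n,\mathfrak n]=n(n-1)$, then $\mathfrak n$ does not admit an abelian complex structure. In particular, free two-step nilpotent Lie algebras of rank $n\ge3$ (those with $\mathfrak z=[\mathfrak n,\mathfrak n]$ and $2\dim\mathfrak z=n(n-1)$) admit no abelian complex structure.
   Context: An abelian complex structure on a real Lie algebra $\mathfrak g$ is a linear map $J$ with $J^2=-\mathrm{Id}$ and $[Jx,Jy]=[x,y]$ for all $x,y\in\mathfrak g$. *)

From HB Require Import structures.
From mathcomp Require Import all_boot all_order all_algebra.
From mathcomp Require Import reals.
Set Implicit Arguments. Unset Strict Implicit. Unset Printing Implicit Defensive.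
Import Order.TTheory GRing.Theory Num.Theory.
Local Open Scope ring_scope.

Definition is_lie_bracket (F : fieldType) (V : vectType F) (br : V -> V -> V) : Prop :=
  [/\ (forall (a : F) (x y z : V), br (a *: x + y) z = a *: br x z + br y z),
      (forall (a : F) (x y z : V), br x (a *: y + z) = a *: br x y + br x z),
      (forall x : V, br x x = 0)
    & (forall x y z : V, br x (br y z) + br y (br z x) + br z (br x y) = 0)].

Definition two_step_nilpotent (F : fieldType) (V : vectType F) (br : V -> V -> V) : Prop :=
  (forall x y z : V, br x (br y z) = 0) /\ (exists x y : V, br x y != 0).

Definition is_center (F : fieldType) (V : vectType F) (br : V -> V -> V)
    (Z : {vspace V}) : Prop :=
  forall x : V, x \in Z <-> (forall y : V, br x y = 0).

Definition is_derived (F : fieldType) (V : vectType F) (br : V -> V -> V)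
    (D : {vspace V}) : Prop :=
  (forall x y : V, br x y \in D) /\
  (forall U : {vspace V}, (forall x y : V, br x y \in U) -> (D <= U)%VS).

Definition abelian_complex_structure (F : fieldType) (V : vectType F)
    (br : V -> V -> V) (J : 'End(V)) : Prop :=
  (forall x : V, J (J x) = - x) /\ (forall x y : V, br (J x) (J y) = br x y).

From HB Require Import structures.
From mathcomp Require Import all_boot all_order all_algebra.
From mathcomp Require Import reals.
From mathcomp Require Import zify lra.
Set Implicit Arguments. Unset Strict Implicit. Unset Printing Implicit Defensive.
Import Order.TTheory GRing.Theory Num.Theory.
Local Open Scope ring_scope.

(* An abelian complex structure J preserves the center z, and for x outside z
   the vector J x stays outside z + Rx, because J^2 = -1 has no real
   eigenvalue.  Completing y, Jx, x (independent modulo z) to a list e of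
   length n spanning the algebra modulo z, the derived algebra is spanned by
   the n(n-1)/2 brackets of pairs from e.  But [y,x] = -[Jx,Jy], and Jy is a
   combination of e modulo the center, so [y,x] lies in the span of the other
   brackets [Jx,_]: hence 2 dim [n,n] < n(n-1). *)

Fixpoint brackets {T U : Type} (f : T -> T -> U) (s : seq T) : seq U :=
  if s is u :: t then [seq f u v | v <- t] ++ brackets f t else [::].

Lemma size_brackets (T U : Type) (f : T -> T -> U) (s : seq T) :
  (2 * size (brackets f s) = size s * (size s).-1)%N.
Proof.
elim: s => [//|u t IH] /=; rewrite size_cat size_map mulnDr IH.
by case: (size t) => [|k] /=; lia.
Qed.

Section LinearAlgebra.
Variables (F : fieldType) (V : vectType F).

Lemma dim_addv_line (U : {vspace V}) v :
  v \notin U -> \dim (U + <[v]>) = (\dim U).+1.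
Proof.
move=> vU; have v0 : v != 0 by apply: contraNneq vU => ->; rewrite mem0v.
rewrite dimv_disjoint_sum ?dim_vline ?v0 ?addn1 //; apply/eqP; rewrite -subv0.
apply/subvP => w /memv_capP [wU /vlineP [k def_w]]; rewrite memv0 def_w scaler_eq0.
by move: wU; rewrite def_w rpredZeq (negbTE vU) orbF => ->.
Qed.

Lemma dim_span_cons_addv (U : {vspace V}) (s : seq V) v :
  v \notin (<<s>> + U)%VS -> \dim (<<v :: s>> + U) = (\dim (<<s>> + U)).+1.
Proof. by move=> /dim_addv_line <-; rewrite span_cons -addvA addvC. Qed.

Lemma exists_notin_vspace (U : {vspace V}) :
  (\dim U < \dim (fullv : {vspace V}))%N -> exists v, v \notin U.
Proof.
move=> ltUf; have /subvPn [v _ vU] : ~~ (fullv <= U)%VS.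
  by apply: contraTN ltUf => /dimvS; rewrite leqNgt.
by exists v.
Qed.

Lemma span_cat_basis_compl (U : {vspace V}) (s : seq V) :
  (<<s ++ vbasis (<<s>> + U)^C>> + U)%VS = fullv.
Proof.
by rewrite span_cat (span_basis (vbasisP _)) -addvA [(_ + U)%VS]addvC addvA addv_complf.
Qed.

End LinearAlgebra.

Lemma complex_structure_notin_addv_line (R : realFieldType) (V : vectType R)
    (J : 'End(V)) (U : {vspace V}) x :
  (forall v, J (J v) = - v) -> (forall u, u \in U -> J u \in U) ->
  x \notin U -> J x \notin (U + <[x]>)%VS.
Proof.
move=> JJ JU xU; apply: contra xU => /memv_addP [u uU [_ /vlineP [c ->] Jx]].
have c2_neq0 : 1 + c * c != 0 by apply: lt0r_neq0; nra.
have JJx : - x = J u + c *: u + (c * c) *: x.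
  by rewrite -JJ Jx linearD linearZ /= Jx scalerDr scalerA addrA.
have -> : x = (1 + c * c)^-1 *: ((1 + c * c) *: x) by rewrite scalerK.
have -> : (1 + c * c) *: x = - (J u + c *: u).
  by rewrite -[J u + _](addrK ((c * c) *: x)) -JJx opprB opprK scalerDl scale1r addrC.
by rewrite memvZ // memvN memvD // ?JU // memvZ.
Qed.

Lemma complex_frame_mod (R : realFieldType) (V : vectType R) (J : 'End(V))
    (Z : {vspace V}) :
  (forall v, J (J v) = - v) -> (forall z, z \in Z -> J z \in Z) ->
  (3 <= \dim (fullv : {vspace V}) - \dim Z)%N ->
  exists x y (rest : seq V), (<<[:: y, J x, x & rest]>> + Z)%VS = fullv /\
    (size rest + 3 = \dim (fullv : {vspace V}) - \dim Z)%N.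
Proof.
move=> JJ JZ n_ge3.
have [x xZ] : exists x, x \notin Z by apply: exists_notin_vspace; lia.
have Z_x : (<<[:: x]>> + Z)%VS = (Z + <[x]>)%VS.
  by rewrite span_cons span_nil addv0 addvC.
have Jx_notin : J x \notin (<<[:: x]>> + Z)%VS.
  by rewrite Z_x complex_structure_notin_addv_line.
have dim2 : \dim (<<[:: J x; x]>> + Z) = (\dim Z).+2.
  by rewrite dim_span_cons_addv // Z_x dim_addv_line.
have [y y_notin] : exists y, y \notin (<<[:: J x; x]>> + Z)%VS.
  by apply: exists_notin_vspace; lia.
set s := [:: y; J x; x].
have dim3 : \dim (<<s>> + Z) = (\dim Z).+3 by rewrite dim_span_cons_addv // dim2.
have dim3_le : (\dim (<<s>> + Z) <= \dim (fullv : {vspace V}))%N.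
  exact/dimvS/subvf.
exists x, y, (vbasis (<<s>> + Z)^C); split; first exact: (span_cat_basis_compl Z s).
by rewrite size_tuple dimv_compl; lia.
Qed.

Section LieBracket.
Variables (F : fieldType) (V : vectType F) (br : V -> V -> V).
Hypothesis lie_br : is_lie_bracket br.

Lemma brDr x y z : br z (x + y) = br z x + br z y.
Proof. by have [_ linr _ _] := lie_br; have := linr 1 z x y; rewrite !scale1r. Qed.

Lemma br0r z : br z 0 = 0.
Proof. by apply: (addrI (br z 0)); rewrite -brDr !addr0. Qed.

Lemma brZr a x z : br z (a *: x) = a *: br z x.
Proof. by have [_ linr _ _] := lie_br; have := linr a z x 0; rewrite !addr0 br0r addr0. Qed.

Lemma brxx x : br x x = 0.
Proof. by have [_ _ ->] := lie_br. Qed.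

Lemma brC x y : br x y = - br y x.
Proof.
have [linl _ _ _] := lie_br; apply/eqP; rewrite -addr_eq0.
by have := linl 1 x y (x + y); rewrite !scale1r brxx !brDr !brxx add0r addr0 => <-.
Qed.

Lemma br_sumr I (r : seq I) (P : pred I) (G : I -> V) z :
  br z (\sum_(i <- r | P i) G i) = \sum_(i <- r | P i) br z (G i).
Proof. by apply: (big_rec2 (fun s t => br z s = t)) => [|i s t _ <-]; rewrite ?br0r ?brDr. Qed.

Lemma br_memv_span (S : {vspace V}) (s : seq V) w a :
  (forall u, u \in s -> br w u \in S) -> a \in <<s>>%VS -> br w a \in S.
Proof.
move=> sS /(coord_span (X := in_tuple s)) ->; rewrite br_sumr; apply: memv_suml => i _.
by rewrite brZr memvZ // sS // mem_nth ?size_tuple.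
Qed.

Lemma mem_brackets (s : seq V) u v :
  u \in s -> v \in s -> br u v \in <<brackets br s>>%VS.
Proof.
elim: s => [//|h t IH] /=; rewrite span_cat !inE.
have brh w : w \in t -> br h w \in (<<map (br h) t>> + <<brackets br t>>)%VS.
  by move=> wt; apply: subvP (addvSl _ _) _ _; apply/memv_span/map_f.
case/predU1P=> [-> | ut]; case/predU1P=> [-> | vt].
- by rewrite brxx mem0v.
- exact: brh.
- by rewrite brC memvN brh.
- by apply: subvP (addvSr _ _) _ _; apply: IH.
Qed.

Variable Z : {vspace V}.
Hypothesis center_Z : is_center br Z.

Lemma br_center_r z w : z \in Z -> br w z = 0.
Proof. by move=> /center_Z zZ; rewrite brC zZ oppr0. Qed.

Lemma br_memv_span_center (S : {vspace V}) (s : seq V) w :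
  (<<s>> + Z)%VS = fullv -> (forall u, u \in s -> br w u \in S) ->
  forall a, br w a \in S.
Proof.
move=> sZ sS a; have /memv_addP [b bs [z zZ ->]] : a \in (<<s>> + Z)%VS.
  by rewrite sZ memvf.
by rewrite brDr (br_center_r _ zZ) addr0; apply: br_memv_span bs.
Qed.

Lemma derived_sub_brackets (D : {vspace V}) (s : seq V) :
  is_derived br D -> (<<s>> + Z)%VS = fullv -> (D <= <<brackets br s>>)%VS.
Proof.
move=> [_ minD] sZ; apply: minD => a b; rewrite brC memvN.
apply: (br_memv_span_center sZ) => u us; rewrite brC memvN.
by apply: (br_memv_span_center sZ) => v vs; apply: mem_brackets.
Qed.

Lemma acs_center_stable (J : 'End(V)) z :
  abelian_complex_structure br J -> z \in Z -> J z \in Z.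
Proof.
move=> [JJ brJ] /center_Z zZ; apply/center_Z => w.
by rewrite -[w]opprK -JJ brJ zZ.
Qed.

End LieBracket.

Theorem mainTheorem14 (R : realType) (V : vectType R) (br : V -> V -> V)
    (Z D : {vspace V}) :
  is_lie_bracket br -> two_step_nilpotent br ->
  is_center br Z -> is_derived br D ->
  (3 <= \dim (fullv : {vspace V}) - \dim Z)%N ->
  (2 * \dim D = (\dim (fullv : {vspace V}) - \dim Z) * (\dim (fullv : {vspace V}) - \dim Z - 1))%N ->
  ~ (exists J : 'End(V), abelian_complex_structure br J).
Proof.
move=> lie_br _ center_Z derived_D n_ge3 dimD [J acsJ]; have [JJ brJ] := acsJ.
have [x [y [rest [spanZ size_rest]]]] :=
  complex_frame_mod JJ (fun z => acs_center_stable center_Z acsJ) n_ge3.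
set T := [seq br y u | u <- rest] ++ [seq br (J x) u | u <- x :: rest] ++ brackets br (x :: rest).
set L := br y (J x) :: T.
have brackets_e : brackets br [:: y, J x, x & rest] = br y (J x) :: br y x :: T by [].
have brJx_L u : u \in [:: y, J x, x & rest] -> br (J x) u \in <<L>>%VS.
  case/predU1P => [-> | /predU1P [-> | u_in]].
  - by rewrite (brC lie_br) memvN memv_span ?mem_head.
  - by rewrite (brxx lie_br) mem0v.
  - by apply: memv_span; rewrite /L /T inE !mem_cat map_f ?orbT.
have yx_L : br y x \in <<L>>%VS.
  by rewrite (brC lie_br) -brJ memvN (br_memv_span_center lie_br center_Z spanZ brJx_L).
have D_L : (D <= <<L>>)%VS.
  apply: subv_trans (derived_sub_brackets lie_br center_Z derived_D spanZ) _.
  rewrite brackets_e; apply/span_subvP => w /predU1P [-> | /predU1P [-> | w_T]] //.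
  - by rewrite memv_span ?mem_head.
  - by apply: memv_span; rewrite /L inE; apply/orP; right.
have size_L : (size L).+1 = \dim D.
  apply/eqP; rewrite -(eqn_pmul2l (isT : 0 < 2)%N) dimD -size_rest addn3 subn1 /=.
  by rewrite -[(size L).+1]/(size (brackets br [:: y, J x, x & rest])) size_brackets.
by have := leq_trans (dimvS D_L) (dim_span L); rewrite -size_L ltnn.
Qed.
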